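(* Let $d$ be a positive integer, $q\geq 2$ an integer, and $x\in\mathbb{Z}$. Then $$\liminf_{N\to\infty}\frac{|\{n\in\mathbb{N}: n<N,\ u_q(n)+x\equiv 0\pmod d\}|}{N}\geq\frac{\varphi(d)}{dq}\left\lfloor\frac{q}{d}\right\rfloor,$$ where $\varphi$ is Euler's totient function.
   Context: For an integer $q\geq 2$ and $n\in\mathbb{N}$: $v_q(0)=0$ and, for $n>0$, $v_q(n)=\max\{k: q^k\mid n\}$; $w_q(n)=\sum_{i=0}^n v_q(i)$; $u_q(n)=\sum_{i=0}^n w_q(i)$. *)

From mathcomp Require Import all_boot all_order all_algebra.
From mathcomp Require Import all_classical all_reals all_analysis.

Set Implicit Arguments.
Unset Strict Implicit.
Unset Printing Implicit Defensive.

(* v_q(0) = 0; for n > 0, v_q(n) = max { k : q^k | n }.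
   For n > 0 and q >= 2 every such k satisfies k < n.+1, so the max over
   k < n.+1 is the max over all k. *)
Definition vq (q n : nat) : nat :=
  if n == 0 then 0 else \max_(k < n.+1 | q ^ k %| n) k.

Definition wq (q n : nat) : nat := \sum_(i < n.+1) vq q i.

Definition uq (q n : nat) : nat := \sum_(i < n.+1) wq q i.

Definition cnt (q d : nat) (x : int) (N : nat) : nat :=
  count (fun n => ((uq q n)%:Z + x)%R \in dvdz d%:Z) (iota 0 N).

(* For r < q one has u_q(mq + r) = u_q(mq) + r w_q(mq), so on a block [mq, mq + q)
   with w_q(mq) coprime to d the residues of u_q(n) + x run through an arithmetic
   progression with invertible step, and at least floor(q/d) of them vanish.  It
   remains to see that w_q(mq) is coprime to d for a proportion phi(d)/d - o(1) of
   the m, i.e. that w_q(sq), s < q^J, is equidistributed modulo d.  Splitting off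
   the leading digit of s gives G_{J+1}(a) = sum_(b < q) G_J(a + b c_J), where
   G_J(a) counts the s < q^J with d | w_q(sq) + a and c_{J+1} = q c_J + 1.  Two
   steps produce the q^2 shifts a + b + (bq + r) c_J; the d of them with b < d and
   d | bq + r reduce to a + b, and their counts add up to exactly q^J, so the
   defect q^J - d G_J(a) grows by a factor at most q^2 - d, while q^J grows by q^2. *)

From mathcomp Require Import all_boot all_order all_algebra.
From mathcomp Require Import all_classical all_reals all_analysis.
From mathcomp Require Import zify ring lra.

Set Implicit Arguments.
Unset Strict Implicit.
Unset Printing Implicit Defensive.

Section Valuation.
Variable q : nat.
Hypothesis q_gt1 : 1 < q.

Lemma vq_dvdn n k : 0 < n -> (q ^ k %| n) = (k <= vq q n).
Proof.
move=> n_gt0; rewrite /vq (negbTE (lt0n_neq0 n_gt0)).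
rewrite (@bigmax_eq_arg _ ord0); last exact: dvd1n.
case: arg_maxnP => [|j /= jn j_max]; first exact: dvd1n.
apply/idP/idP => [qk_n | kj]; last by apply: dvdn_trans jn; rewrite dvdn_exp2l.
have kn : k < n.+1 by rewrite ltnS (leq_trans (ltnW (ltn_expl k q_gt1)) (dvdn_leq n_gt0 qk_n)).
exact: (j_max (Ordinal kn)).
Qed.

Lemma vq_eq n k : 0 < n -> q ^ k %| n -> ~~ (q ^ k.+1 %| n) -> vq q n = k.
Proof. by move=> n_gt0; rewrite !vq_dvdn // -leqNgt => ? ?; apply/eqP; rewrite eqn_leq; apply/andP. Qed.

Lemma vq_small r : 0 < r < q -> vq q r = 0.
Proof. by case/andP=> r_gt0 r_lt; apply: vq_eq; rewrite ?dvd1n ?expn1 ?gtnNdvd. Qed.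

Lemma vq_mul_pow a L : 0 < a -> vq q (a * q ^ L) = vq q a + L.
Proof.
move=> a_gt0; have q_gt0 : 0 < q ^ L by rewrite expn_gt0 ltnW.
apply: vq_eq; first by rewrite muln_gt0 a_gt0.
  by rewrite expnD dvdn_mul // vq_dvdn.
by rewrite -addSn expnD dvdn_pmul2r // vq_dvdn // ltnn.
Qed.

Lemma vq_add_mul_pow a L i : 0 < i < q ^ L -> vq q (a * q ^ L + i) = vq q i.
Proof.
case/andP=> i_gt0 i_lt; set v := vq q i.
have v_lt : v < L.
  rewrite ltnNge; apply/negP => /(dvdn_exp2l q) qL_qv.
  have : q ^ L %| i by apply: dvdn_trans qL_qv _; rewrite vq_dvdn.
  by move/(dvdn_leq i_gt0); rewrite leqNgt i_lt.
apply: vq_eq; first by rewrite addn_gt0 i_gt0 orbT.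
  by rewrite dvdn_add ?dvdn_mull ?dvdn_exp2l ?vq_dvdn // ltnW.
by rewrite dvdn_addr ?dvdn_mull ?dvdn_exp2l // vq_dvdn // ltnn.
Qed.

Lemma wqS n : wq q n.+1 = wq q n + vq q n.+1.
Proof. by rewrite /wq big_ord_recr. Qed.

Lemma wq0 : wq q 0 = 0.
Proof. by rewrite /wq big_ord1. Qed.

Lemma uqS n : uq q n.+1 = uq q n + wq q n.+1.
Proof. by rewrite /uq big_ord_recr. Qed.

Lemma wq_small r : r < q -> wq q r = 0.
Proof.
elim: r => [|r IH] r_lt; first exact: wq0.
by rewrite wqS IH ?vq_small // ltnW.
Qed.

Lemma wq_add_mul_pow a L s : s < q ^ L -> wq q (a * q ^ L + s) = wq q (a * q ^ L) + wq q s.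
Proof.
elim: s => [|s IH] s_lt; first by rewrite addn0 wq0 addn0.
by rewrite addnS !wqS (IH (ltnW s_lt)) -addnS vq_add_mul_pow ?addnA.
Qed.

Lemma wq_pow L : wq q (q ^ L) = wq q (q ^ L).-1 + L.
Proof.
have q_gt0 : 0 < q ^ L by rewrite expn_gt0 ltnW.
rewrite -{1}(prednK q_gt0) wqS prednK // -[q ^ L]mul1n vq_mul_pow //.
by rewrite (@vq_eq 1 0) ?dvd1n ?expn1 ?dvdn1 // neq_ltn q_gt1 orbT.
Qed.

Lemma wq_mul_pow a L : wq q (a * q ^ L) = a * wq q (q ^ L) + wq q a.
Proof.
have q_gt0 : 0 < q ^ L by rewrite expn_gt0 ltnW.
elim: a => [|a IH]; first by rewrite !mul0n wq0.
have e : a.+1 * q ^ L = (a * q ^ L + (q ^ L).-1).+1 by rewrite mulSnr -addnS prednK.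
rewrite {1}e wqS -e wq_add_mul_pow ?ltn_predL // vq_mul_pow // IH wqS wq_pow; lia.
Qed.

Lemma wq_powS L : wq q (q ^ L.+1) = q * wq q (q ^ L) + 1.
Proof.
have := wq_pow 1; rewrite expn1 (@wq_small q.-1) ?ltn_predL ?(ltnW q_gt1) // => wq_q.
by rewrite expnS wq_mul_pow wq_q.
Qed.

Lemma uq_add_small m r : r < q -> uq q (m * q + r) = uq q (m * q) + r * wq q (m * q).
Proof.
elim: r => [|r IH] r_lt; first by rewrite addn0 mul0n addn0.
rewrite addnS uqS (IH (ltnW r_lt)) -addnS.
have := @wq_add_mul_pow m 1 r.+1; rewrite expn1 (wq_small r_lt) addn0 => /(_ r_lt) ->.
by rewrite mulSn; lia.
Qed.

End Valuation.

Lemma sum_nat_blocks (F : nat -> nat) K n :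
  \sum_(0 <= i < K * n) F i = \sum_(0 <= k < K) \sum_(0 <= s < n) F (k * n + s).
Proof.
rewrite big_nat_mul; apply: eq_bigr => k _.
by rewrite -{1}(add0n (k * n)) big_addn mulSn addnK; apply: eq_bigr => s _; rewrite addnC.
Qed.

Lemma sum_affine_lb (F : nat -> nat) m n c E T :
  (forall i, m <= i < n -> T <= c * F i + E) ->
  (n - m) * T <= c * \sum_(m <= i < n) F i + (n - m) * E.
Proof.
move=> FT; rewrite -!sum_nat_const_nat big_distrr -big_split /=.
by rewrite big_nat_cond [leqRHS]big_nat_cond; apply: leq_sum => i /andP[/FT].
Qed.

Lemma sum_affine_lb_but_one (F : nat -> nat) n c E T i0 : i0 < n ->
  (forall i, i < n -> T <= c * F i + E) ->
  c * F i0 + (n - 1) * T <= c * \sum_(0 <= i < n) F i + (n - 1) * E.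
Proof.
move=> i0_lt FT; rewrite (@big_cat_nat _ _ _ i0) ?(ltnW i0_lt) //= (big_ltn i0_lt).
have lo : (i0 - 0) * T <= c * \sum_(0 <= i < i0) F i + (i0 - 0) * E.
  by apply: sum_affine_lb => i /andP[_ i_lt]; apply/FT/(ltn_trans i_lt).
have hi : (n - i0.+1) * T <= c * \sum_(i0.+1 <= i < n) F i + (n - i0.+1) * E.
  by apply: sum_affine_lb => i /andP[_ i_lt]; apply: FT.
have -> : n - 1 = (i0 - 0) + (n - i0.+1) by lia.
rewrite !mulnDl !mulnDr; lia.
Qed.

Lemma sum_dvdn_add d y : 0 < d -> \sum_(0 <= t < d) (d %| y + t) = 1.
Proof.
move=> d_gt0; elim: y => [|y IH].
  rewrite (big_ltn d_gt0) dvdn0 big_nat big1 // => t /andP[t_gt0 t_lt].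
  by rewrite add0n gtnNdvd.
have : \sum_(0 <= t < d.+1) (d %| y + t) = (d %| y) + \sum_(0 <= t < d) (d %| y.+1 + t).
  by rewrite big_nat_recl // addn0; under eq_bigr do rewrite -addSnnS.
rewrite big_nat_recr //= IH dvdn_addl //; lia.
Qed.

Lemma exists_dvdn_add d y : 0 < d -> exists2 t, t < d & d %| y + t.
Proof.
move=> d_gt0; have [t [t_in _ t_dvd _]] := sum_nat_seq_eq1 (sum_dvdn_add y d_gt0).
by exists t; [rewrite mem_index_iota in t_in | case: (d %| y + t) t_dvd].
Qed.

Lemma coprime_dvdn_add d y t : d %| y + t -> coprime d t -> coprime d y.
Proof.
move=> d_yt /eqP dt; rewrite /coprime -dvdn1 -dt dvdn_gcd dvdn_gcdl /=.
by rewrite -(dvdn_addr _ (dvdn_gcdr d y)) (dvdn_trans (dvdn_gcdl d y) d_yt).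
Qed.

Lemma sum_coprime_dvdn_add d y : 0 < d ->
  \sum_(0 <= t < d) coprime d t * (d %| y + t) <= coprime d y.
Proof.
move=> d_gt0; case: (boolP (coprime d y)) => [_ | ncop] /=.
  rewrite -(sum_dvdn_add y d_gt0) leq_sum // => t _.
  by case: (coprime d t); rewrite ?mul1n ?mul0n.
rewrite leqn0; apply/eqP/big1 => t _; case: (boolP (coprime d t)) => [ct|_]; last by [].
by rewrite mul1n; apply/eqP; rewrite eqb0; apply: contra ncop => /coprime_dvdn_add; apply.
Qed.

Lemma sum_dvdn_add_mul_ge d Z Y n : 0 < d -> coprime d Y ->
  n %/ d <= \sum_(0 <= r < n) (d %| Z + r * Y).
Proof.
move=> d_gt0 dY.
have [r0 r0_lt r0_dvd] : exists2 r0, r0 < d & d %| Z + r0 * Y.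
  have [a _ da] := Bezoutl Y d_gt0; rewrite (eqP dY) in da.
  exists (Z * a %% d); first exact: ltn_pmod.
  rewrite /dvdn -modnDmr modnMml modnDmr -mulnA -{1}[Z]muln1 -mulnDr.
  by rewrite -/(dvdn _ _) dvdn_mull.
rewrite (@big_cat_nat _ _ _ (n %/ d * d)) ?leq_divM //= sum_nat_blocks.
apply: leq_trans (leq_addr _ _).
apply: (@leq_trans (\sum_(0 <= i < n %/ d) 1)); first by rewrite sum_nat_const_nat subn0 muln1.
apply: leq_sum => i _; rewrite (bigD1_seq r0) ?mem_index_iota ?iota_uniq //=.
rewrite mulnDl addnCA dvdn_addr ?r0_dvd //; exact/dvdn_mulr/dvdn_mull.
Qed.

Section Equidistribution.
Variables q d : nat.
Hypotheses (q_gt1 : 1 < q) (d_gt0 : 0 < d).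

Definition count_wq_dvd J a := \sum_(0 <= s < q ^ J) (d %| wq q (s * q) + a).

Lemma count_wq_dvdS J a :
  count_wq_dvd J.+1 a = \sum_(0 <= b < q) count_wq_dvd J (a + b * wq q (q ^ J.+1)).
Proof.
rewrite /count_wq_dvd expnS sum_nat_blocks; apply: eq_big_nat => b /andP[_ b_lt].
apply: eq_big_nat => s /andP[_ s_lt].
have sq_lt : s * q < q ^ J.+1 by rewrite expnSr ltn_pmul2r // ltnW.
rewrite mulnDl -mulnA -expnSr (wq_add_mul_pow q_gt1 _ sq_lt) wq_mul_pow // (wq_small q_gt1 b_lt).
by rewrite addn0 -expnS; congr (d %| _); lia.
Qed.

Lemma count_wq_dvd_shift J y z : d %| z -> count_wq_dvd J (y + z) = count_wq_dvd J y.
Proof. by move=> dz; apply: eq_bigr => s _; rewrite addnA dvdn_addl. Qed.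

Lemma sum_count_wq_dvd J a : \sum_(0 <= t < d) count_wq_dvd J (a + t) = q ^ J.
Proof.
rewrite /count_wq_dvd exchange_big_nat /=.
transitivity (\sum_(0 <= s < q ^ J) 1); last by rewrite sum_nat_const_nat subn0 muln1.
apply: eq_bigr => s _; rewrite -(sum_dvdn_add (wq q (s * q) + a) d_gt0).
by apply: eq_bigr => t _; rewrite addnA.
Qed.

Lemma count_wq_dvdSS J a : count_wq_dvd J.+2 a =
  \sum_(0 <= b < q) \sum_(0 <= r < q) count_wq_dvd J (a + b + (b * q + r) * wq q (q ^ J.+1)).
Proof.
rewrite count_wq_dvdS; apply: eq_bigr => b _; rewrite count_wq_dvdS; apply: eq_bigr => r _.
by rewrite wq_powS //; congr count_wq_dvd; ring.
Qed.

Lemma sum_coprime_wq_ge J E C : (forall a, q ^ J <= d * count_wq_dvd J a + E) ->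
  totient d * q ^ J <= d * \sum_(0 <= s < q ^ J) coprime d (C + wq q (s * q)) + totient d * E.
Proof.
move=> count_ge.
have coprime_hits : \sum_(0 <= t < d) coprime d t * count_wq_dvd J (C + t) <=
                    \sum_(0 <= s < q ^ J) coprime d (C + wq q (s * q)).
  rewrite /count_wq_dvd; under eq_bigr do rewrite big_distrr.
  rewrite exchange_big_nat /=; apply: leq_sum => s _.
  under eq_bigr do rewrite addnA [wq q _ + C]addnC.
  exact: sum_coprime_dvdn_add.
rewrite totient_count_coprime !big_distrl /=.
apply: (@leq_trans (\sum_(0 <= t < d) (d * (coprime d t * count_wq_dvd J (C + t)) + coprime d t * E))).
  by apply: leq_sum => t _; case: (coprime d t); rewrite ?mul1n ?mul0n.
by rewrite big_split /= -big_distrr leq_add2r leq_mul2l coprime_hits orbT.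
Qed.

Hypothesis d_le_q : d <= q.

Lemma count_wq_dvdSS_ge J E : (forall a, q ^ J <= d * count_wq_dvd J a + E) ->
  forall a, q ^ J.+2 <= d * count_wq_dvd J.+2 a + (q * q - d) * E.
Proof.
move=> count_ge a; set c := wq q (q ^ J.+1); set X := q ^ J.
pose row b := \sum_(0 <= r < q) count_wq_dvd J (a + b + (b * q + r) * c).
have row_ge b : q * X <= d * row b + q * E.
  have := @sum_affine_lb (fun r => count_wq_dvd J (a + b + (b * q + r) * c)) 0 q d E X.
  by rewrite subn0; apply=> r _; apply: count_ge.
have row_ge_small b : b < d -> d * count_wq_dvd J (a + b) + (q - 1) * X <= d * row b + (q - 1) * E.
  move=> b_lt; have [r0 r0_lt r0_dvd] := exists_dvdn_add (b * q) d_gt0.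
  have := @sum_affine_lb_but_one (fun r => count_wq_dvd J (a + b + (b * q + r) * c)) q d E X r0.
  rewrite /= (count_wq_dvd_shift J (a + b) (dvdn_mulr _ r0_dvd)).
  by apply=> [|r _]; [apply: leq_trans d_le_q | apply: count_ge].
have small_rows : \sum_(0 <= b < d) (d * count_wq_dvd J (a + b) + (q - 1) * X) <=
                   \sum_(0 <= b < d) (d * row b + (q - 1) * E).
  by rewrite big_nat_cond [leqRHS]big_nat_cond; apply: leq_sum => b /andP[/andP[_ /row_ge_small]].
rewrite !big_split /= -!big_distrr /= sum_count_wq_dvd !sum_nat_const_nat subn0 -/X in small_rows.
have large_rows : (q - d) * (q * X) <= d * \sum_(d <= b < q) row b + (q - d) * (q * E).
  by apply: sum_affine_lb => b _; exact: row_ge.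
have -> : count_wq_dvd J.+2 a = \sum_(0 <= b < d) row b + \sum_(d <= b < q) row b.
  by rewrite count_wq_dvdSS (@big_cat_nat _ _ _ d).
have qd_eq : (q - 1) * d + d = q * d by rewrite -mulSnr subn1 prednK // ltnW.
have qq_eq : (q - d) * q + d * q = q * q by rewrite -mulnDl subnK.
have split_qqd : q * q - d = (q - 1) * d + (q - d) * q.
  by rewrite -qq_eq [d * q]mulnC -qd_eq addnA addnK addnC.
rewrite !expnS -/X split_qqd mulnA -qq_eq [d * q]mulnC -qd_eq; lia.
Qed.

Lemma count_wq_dvd_ge k a : q ^ (2 * k) <= d * count_wq_dvd (2 * k) a + (q * q - d) ^ k.
Proof.
elim: k a => [|k IH] a; first by rewrite muln0 expn0 leq_addl.
by rewrite mulnS expnS; apply: count_wq_dvdSS_ge.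
Qed.

Lemma sum_coprime_wq_blocks_ge K k :
  totient d * K * q ^ (2 * k) <=
  d * \sum_(0 <= m < K * q ^ (2 * k)) coprime d (wq q (m * q)) + totient d * K * (q * q - d) ^ k.
Proof.
set X := q ^ (2 * k); set E := (q * q - d) ^ k; rewrite sum_nat_blocks.
have block_ge j : totient d * X <= d * \sum_(0 <= s < X) coprime d (wq q ((j * X + s) * q)) + totient d * E.
  apply: leq_trans (sum_coprime_wq_ge (wq q (j * X * q)) (count_wq_dvd_ge k)) (eq_leq _).
  congr (d * _ + _); apply: eq_big_nat => s /andP[_ s_lt].
  have sq_lt : s * q < q ^ (2 * k).+1 by rewrite expnSr ltn_pmul2r // ltnW.
  by rewrite mulnDl -!mulnA -expnSr wq_add_mul_pow.
have := @sum_affine_lb _ 0 K d (totient d * E) (totient d * X) (fun j _ => block_ge j).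
by rewrite subn0 [totient d * K]mulnC -!mulnA.
Qed.

End Equidistribution.

Lemma sum_dvdn_uq_ge q d a K k : 1 < q -> 0 < d ->
  totient d * (q %/ d) * K * q ^ (2 * k) <=
  d * \sum_(0 <= n < K * q ^ (2 * k) * q) (d %| uq q n + a) +
  totient d * (q %/ d) * K * (q * q - d) ^ k.
Proof.
move=> q_gt1 d_gt0; have [d_le_q | /divn_small ->] := leqP d q; last by rewrite muln0 !mul0n.
have row_ge m : q %/ d * coprime d (wq q (m * q)) <= \sum_(0 <= r < q) (d %| uq q (m * q + r) + a).
  case: (boolP (coprime d (wq q (m * q)))) => [cop | _] /=; last by rewrite muln0.
  rewrite muln1; apply: leq_trans (sum_dvdn_add_mul_ge (uq q (m * q) + a) q d_gt0 cop) _.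
  by apply/eq_leq/eq_big_nat => r /andP[_ r_lt]; rewrite uq_add_small // addnAC.
have := leq_mul (leqnn (q %/ d)) (sum_coprime_wq_blocks_ge q_gt1 d_gt0 d_le_q K k).
set S := \sum_(0 <= m < _) _ => blocks_ge.
apply: (@leq_trans (d * (q %/ d * S) + totient d * (q %/ d) * K * (q * q - d) ^ k)); first lia.
rewrite leq_add2r leq_mul2l sum_nat_blocks big_distrr /=.
by rewrite leq_sum ?orbT // => m _; apply: row_ge.
Qed.

Lemma leq_cnt q d x : {homo cnt q d x : m n / m <= n}.
Proof. by move=> m n mn; rewrite /cnt -(subnKC mn) iotaD count_cat leq_addr. Qed.

Import Order.TTheory GRing.Theory Num.Theory.
Local Open Scope ring_scope.
Local Open Scope classical_set_scope.

Lemma cnt_sum q d x N : (0 < d)%N ->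
  cnt q d x N = (\sum_(0 <= n < N) (d %| uq q n + `|(x %% d%:Z)%Z|))%N.
Proof.
move=> d_gt0; rewrite /cnt -sum1_count big_mkcond /= /index_iota subn0.
apply: eq_bigr => n _.
have x_mod : x = (x %/ d%:Z)%Z * d%:Z + `|(x %% d%:Z)%Z|%:Z.
  by rewrite abszE ger0_norm -?divz_eq // modz_ge0 // eqz_nat -lt0n.
by rewrite {1}x_mod addrCA addrC rpredDr ?dvdz_mull ?dvdzz // -PoszD dvdzE.
Qed.

Lemma ratio_ge_blocks (R : realType) (f : nat -> nat) (B : nat) (c : R) :
  (0 < B)%N -> {homo f : m n / (m <= n)%N} -> 0 <= c ->
  (forall K, c * K%:R <= (f (K * B)%N)%:R) ->
  forall N, (0 < N)%N -> c / B%:R - c / N%:R <= (f N)%:R / N%:R.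
Proof.
move=> B_gt0 f_mono c_ge0 f_blocks N N_gt0; set K := (N %/ B)%N.
have fN_ge : c * K%:R <= (f N)%:R.
  by apply: le_trans (f_blocks K) _; rewrite ler_nat f_mono // leq_divM.
have N_le : N%:R / B%:R <= K%:R + 1 :> R.
  by rewrite ler_pdivrMr ?ltr0n // natr1 -natrM ler_nat ltnW // ltn_ceil.
have cN_le := ler_wpM2l c_ge0 N_le.
rewrite ler_pdivlMr ?ltr0n // mulrBl mulrAC divfK ?pnatr_eq0 -?lt0n //.
by rewrite -mulrA; lra.
Qed.

Lemma cnt_ratio_ge (R : realType) d q (x : int) k : (0 < d)%N -> (1 < q)%N ->
  exists c : R, forall N, (0 < N)%N ->
    (totient d)%:R / (d * q)%:R * (q %/ d)%:R * (1 - ((q * q - d)%:R / (q * q)%:R) ^+ k) - c / N%:R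
    <= (cnt q d x N)%:R / N%:R.
Proof.
move=> d_gt0 q_gt1; have q_gt0 := ltnW q_gt1.
set X := (q ^ (2 * k))%N; set E := ((q * q - d) ^ k)%N; set c0 := (totient d * (q %/ d))%N.
have X_gt0 : (0 < X)%N by rewrite /X expn_gt0 q_gt0.
have XE : X = ((q * q) ^ k)%N by rewrite /X expnM mulnn.
have E_le : (E <= X)%N.
  by rewrite XE /E; case: (posnP k) => [->|k_gt0]; rewrite ?expn0 ?leq_exp2r ?leq_subr.
exists (c0%:R * (X%:R - E%:R) / d%:R) => N N_gt0.
have -> : (totient d)%:R / (d * q)%:R * (q %/ d)%:R * (1 - ((q * q - d)%:R / (q * q)%:R) ^+ k) =
          c0%:R * (X%:R - E%:R) / d%:R / (X * q)%:R :> R.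
  rewrite expr_div_n -!natrX -/E -XE /c0 !natrM; field.
  by rewrite !pnatr_eq0 -!lt0n X_gt0 q_gt0 d_gt0.
apply: ratio_ge_blocks => //; first by rewrite muln_gt0 X_gt0.
- exact: leq_cnt.
- by rewrite divr_ge0 // mulr_ge0 // subr_ge0 ler_nat.
move=> K; rewrite mulnA cnt_sum // mulrAC ler_pdivrMr ?ltr0n //.
have := sum_dvdn_uq_ge `|(x %% d%:Z)%Z| K k q_gt1 d_gt0; rewrite -(ler_nat R) !natrD !natrM.
rewrite -/X -/E; lra.
Qed.

Lemma limn_einf_ge (R : realType) (u : nat -> R) (b : R) :
  (forall e, 0 < e -> \forall N \near \oo, b - e <= u N) ->
  (b%:E <= limn_einf (fun N => (u N)%:E))%E.
Proof.
move=> u_ge; rewrite limn_einf_lim; apply/lee_subgt0Pr => e e_gt0.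
apply: lime_ge; first exact: is_cvg_einfs.
have [N0 _ N0_ge] := u_ge e e_gt0; exists N0 => // n /= n_ge.
apply: le_ereal_inf_tmp => _ [m /= m_ge <-].
by rewrite -EFinB lee_fin N0_ge //= (leq_trans n_ge m_ge).
Qed.

Theorem proposition4p1 (R : realType) (d q : nat) (x : int) :
  (0 < d)%N -> (2 <= q)%N ->
  (((totient d)%:R / (d * q)%:R * (q %/ d)%:R : R)%:E <=
   limn_einf (fun N : nat => (((cnt q d x N)%:R / N%:R : R)%:E)))%E.
Proof.
move=> d_gt0 q_ge2; set b := (_ / _ * _ : R); set r : R := (q * q - d)%:R / (q * q)%:R.
have r_lt1 : `|r| < 1.
  have qq_gt0 : (0 < q * q)%N by rewrite muln_gt0 (ltnW q_ge2).
  by rewrite ger0_norm ?divr_ge0 // ltr_pdivrMr ?ltr0n // mul1r ltr_nat; lia.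
apply: limn_einf_ge => e e_gt0.
have geom_cvg : (fun k => b * r ^+ k) @ \oo --> 0.
  by rewrite -(mulr0 b); apply: cvgMl_tmp; exact: cvg_expr.
have e2_gt0 : 0 < e / 2 by rewrite divr_gt0.
move/cvgr_lt: geom_cvg => /(_ _ e2_gt0)[k _ /(_ k (leqnn k)) small_k].
have [c ratio_ge] := cnt_ratio_ge R x k d_gt0 q_ge2.
near=> N.
have N_gt0 : (0 < N)%N by near: N; exact: nbhs_infty_gt.
apply: le_trans (ratio_ge N N_gt0).
have : c / N%:R < e / 2.
  rewrite ltr_pdivrMr ?ltr0n // -ltr_pdivrMl ?divr_gt0 //.
  by near: N; exact: nbhs_infty_gtr.
by rewrite -/b -/r mulrBr mulr1; lra.
Unshelve. all: by end_near. Qed.
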